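(* Let $1\le k\le n$ and let $A$ be a real diagonal $n\times n$ positive definite matrix with trace $k$. Then $$\inf_{Y\ \text{Hermitian}}F_A(Y)=\inf_{Y\ \text{real diagonal}}F_A(Y),\qquad F_A(Y)=\langle Y,A\rangle+\log\int_{\mathcal P_k}e^{-\langle Y,X\rangle}d\mu_k(X).$$
   Context: $\mathcal P_k$ is the set of $n\times n$ rank-$k$ Hermitian PSD projections, $\mu_k$ the unique unitarily (conjugation-)invariant Borel probability measure on $\mathcal P_k$, and $\langle Y,X\rangle=\mathrm{Tr}(YX^* )$. *)

From HB Require Import structures.
From mathcomp Require Import all_boot all_order all_algebra.
From mathcomp Require Import complex.
From mathcomp Require Import all_classical all_reals all_analysis.
Set Implicit Arguments. Unset Strict Implicit. Unset Printing Implicit Defensive.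
Import Order.TTheory GRing.Theory Num.Theory.
Local Open Scope classical_set_scope.
Local Open Scope ring_scope.
Local Open Scope complex_scope.

Section Defs.
Variables (R : realType) (n : nat).

Definition ctrmx (m p : nat) (X : 'M[R[i]]_(m, p)) : 'M[R[i]]_(p, m) :=
  (map_mx (fun z : R[i] => z^*) X)^T.

Definition herm (X : 'M[R[i]]_n) : Prop := ctrmx X = X.

Definition psdmx (X : 'M[R[i]]_n) : Prop :=
  herm X /\ forall v : 'cV[R[i]]_n, 0 <= (ctrmx v *m X *m v) 0 0.
Definition posdefmx (X : 'M[R[i]]_n) : Prop :=
  herm X /\ forall v : 'cV[R[i]]_n, v != 0 -> 0 < (ctrmx v *m X *m v) 0 0.

Definition real_diag (X : 'M[R[i]]_n) : Prop :=
  is_diag_mx X /\ forall j, complex.Im (X j j) = 0.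

Definition unitarymx_c (U : 'M[R[i]]_n) : Prop := U *m ctrmx U = 1%:M.

Definition proj_rank (k : nat) (X : 'M[R[i]]_n) : Prop :=
  psdmx X /\ X *m X = X /\ \rank X = k.

(* <Y, X> = Tr (Y conj-transpose(X)), real part; it is real when X, Y are Hermitian *)
Definition inner (Y X : 'M[R[i]]_n) : R[i] := \tr (Y *m ctrmx X).

End Defs.

Definition cmat (R : realType) (n : nat) : Type := 'M[R[i]]_n.
HB.instance Definition _ (R : realType) (n : nat) := Choice.on (cmat R n).
HB.instance Definition _ (R : realType) (n : nat) := isPointed.Build (cmat R n) (0 : 'M[R[i]]_n).

Section Gen.
Variables (R : realType) (n : nat).

(* Borel sigma-algebra on n x n complex matrices: generated by the
   real and imaginary parts of the entries (coordinates). *)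
Definition cmx_gen : set (set (cmat R n)) :=
  [set A | exists (j l : 'I_n) (B : set R), measurable B /\
     (A = [set X : 'M[R[i]]_n | complex.Re (X j l) \in B] \/ A = [set X : 'M[R[i]]_n | complex.Im (X j l) \in B])].

End Gen.

Notation CMx R n := (g_sigma_algebraType (@cmx_gen R n)).

Definition F_A (R : realType) (n : nat) (mu : probability (CMx R n) R)
  (A Y : 'M[R[i]]_n) : \bar R :=
  ((complex.Re (inner Y A))%:E +
   (ln (fine (\int[mu]_(X in setT) (expR (- complex.Re (inner Y (X : 'M[R[i]]_n))))%:E)))%:E)%E.

From HB Require Import structures.
From mathcomp Require Import all_boot all_order all_algebra.
From mathcomp Require Import complex.
From mathcomp Require Import all_classical all_reals all_analysis.
From mathcomp Require Import measurable_realfun ring lra.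
Set Implicit Arguments. Unset Strict Implicit. Unset Printing Implicit Defensive.
Import Order.TTheory GRing.Theory Num.Theory.
Local Open Scope classical_set_scope.
Local Open Scope ring_scope.
Local Open Scope complex_scope.

(* Write Z(Y) = \int e^{-Re<Y,X>} dmu(X), so that F_A(Y) = Re<Y,A> + log Z(Y).
   Real diagonal matrices are Hermitian, so the Hermitian infimum is the
   smaller one.  Conversely, every Hermitian Y is "pinched" to its diagonal
   without increasing F_A:
   - for the diagonal unitary S_m flipping the sign of coordinate m, the
     unitary invariance of mu gives Z(S_m Y S_m) = Z(Y);
   - e^{-t} is midpoint convex, hence so is Z, and Z((Y + S_m Y S_m)/2) <= Z(Y);
   - averaging Y with S_m Y S_m kills the off-diagonal entries in row and
     column m, so n such steps turn Y into its diagonal, which is real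
     diagonal and has the same pairing with the diagonal matrix A.
   Taking logarithms needs 0 < Z(Y) < +oo: on P_k (which has mu-measure 1)
   the entries of X lie in the unit square, so the weight is bounded above
   and below. *)

Section ComplexMatrices.
Variables (R : realType) (n : nat).
Local Notation M := 'M[R[i]]_n.

Lemma ctrmx_mul m p q (A : 'M[R[i]]_(m, p)) (B : 'M[R[i]]_(p, q)) :
  ctrmx (A *m B) = ctrmx B *m ctrmx A.
Proof. by rewrite /ctrmx map_mxM trmx_mul. Qed.

Lemma ctrmxK m p (A : 'M[R[i]]_(m, p)) : ctrmx (ctrmx A) = A.
Proof. by apply/matrixP => j l; rewrite !mxE conjcK. Qed.

Lemma Re_add (a b : R[i]) : complex.Re (a + b) = complex.Re a + complex.Re b.
Proof. by case: a; case: b. Qed.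

Lemma Re_sum (I : Type) (s : seq I) (F : I -> R[i]) :
  complex.Re (\sum_(j <- s) F j) = \sum_(j <- s) complex.Re (F j).
Proof. exact: (big_morph _ Re_add). Qed.

Lemma inner_sum (Y X : M) :
  inner Y X = \sum_(j < n) \sum_(l < n) Y j l * (X j l)^*.
Proof.
rewrite /inner /mxtrace; apply: eq_bigr => j _; rewrite mxE.
by apply: eq_bigr => l _; rewrite !mxE.
Qed.

Lemma inner_diag (Y A : M) : is_diag_mx A ->
  inner Y A = \sum_(j < n) Y j j * (A j j)^*.
Proof.
move/is_diag_mxP => dA; rewrite inner_sum; apply: eq_bigr => j _.
rewrite (bigD1 j) //= [X in _ + X]big1 ?addr0 // => l /= nl.
rewrite dA; last by rewrite eq_sym.
by apply/eqP; rewrite mulf_eq0 conjc_eq0 eqxx orbT.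
Qed.

Lemma idem_rank_tr (X : M) : X *m X = X -> \tr X = (\rank X)%:R.
Proof.
move=> idX; have eX : X = col_base X *m row_base X by rewrite mulmx_base.
have fD := row_base_free X; have fC := col_base_full X.
move: (col_base X) (row_base X) eX fD fC => C D eX fD fC.
have DC : D *m C = 1%:M.
  apply: (row_free_inj fD); rewrite mul1mx; apply: (row_full_inj fC).
  by rewrite !mulmxA -eX -mulmxA -eX idX.
by rewrite {1}eX mxtrace_mulC DC mxtrace1.
Qed.

(* Hermitian idempotents are positive semidefinite: v*Xv = |Xv|^2. *)
Lemma herm_idem_psd (X : M) : herm X -> X *m X = X -> psdmx X.
Proof.
move=> hX idX; split => // v.
have -> : ctrmx v *m X *m v = ctrmx (X *m v) *m (X *m v).
  by rewrite ctrmx_mul hX -{1}idX !mulmxA.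
by rewrite mxE; apply: sumr_ge0 => j _; rewrite !mxE mulrC mulcJ_ge0.
Qed.

(* Rank-k projections are exactly the Hermitian idempotents of trace k;
   this trace description is what makes [P_k] measurable. *)
Lemma proj_rankE k (X : M) :
  proj_rank k X <-> [/\ herm X, X *m X = X & \tr X = k%:R].
Proof.
split; first by move=> [[hX _] [idX rk]]; rewrite idem_rank_tr // rk.
move=> [hX idX trX]; split; first exact: herm_idem_psd.
by split => //; apply/eqP; rewrite -(eqr_nat R[i]) -idem_rank_tr // trX.
Qed.

(* The entries of a Hermitian idempotent lie in the unit square:
   X_jj = sum_u |X_ju|^2 forces 0 <= X_jj <= 1 and |X_jl|^2 <= X_jj. *)
Lemma herm_idem_entry_bound (X : M) j l : herm X -> X *m X = X ->
  `|complex.Re (X j l)| <= 1 /\ `|complex.Im (X j l)| <= 1.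
Proof.
move=> hX idX.
have hc p q : X q p = (X p q)^* by rewrite -[in LHS]hX !mxE.
have Imjj : complex.Im (X j j) = 0 by have := hc j j; case: (X j j) => a b /= []; lra.
pose e u := complex.Re (X j u) ^+ 2 + complex.Im (X j u) ^+ 2.
have Rejj : complex.Re (X j j) = \sum_(u < n) e u.
  rewrite -[in LHS]idX mxE Re_sum; apply: eq_bigr => u _.
  by rewrite (hc j u) /e; case: (X j u) => a b /=; ring.
have e_le u : e u <= complex.Re (X j j).
  by rewrite Rejj (bigD1 u) //= lerDl sumr_ge0 // => v _; rewrite addr_ge0 ?sqr_ge0.
have := e_le j; rewrite /e Imjj => ejj; have := e_le l; rewrite /e => ejl.
have Rejj_le1 : complex.Re (X j j) <= 1 by nra.
by split; rewrite ler_norml; apply/andP; split; nra.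
Qed.

Definition mx_size1 (Y : M) : R :=
  \sum_(j < n) \sum_(l < n) (`|complex.Re (Y j l)| + `|complex.Im (Y j l)|).

Lemma inner_herm_idem_bound (Y X : M) : herm X -> X *m X = X ->
  `|complex.Re (inner Y X)| <= mx_size1 Y.
Proof.
move=> hX idX; rewrite inner_sum Re_sum.
apply: (le_trans (ler_norm_sum _ _ _)); apply: ler_sum => j _; rewrite Re_sum.
apply: (le_trans (ler_norm_sum _ _ _)); apply: ler_sum => l _.
have [bRe bIm] := herm_idem_entry_bound j l hX idX.
have -> : complex.Re (Y j l * (X j l)^*) =
  complex.Re (Y j l) * complex.Re (X j l) + complex.Im (Y j l) * complex.Im (X j l).
  by case: (Y j l) => a b; case: (X j l) => c d /=; ring.
by apply: (le_trans (ler_normD _ _)); apply: lerD; rewrite normrM ler_piMr.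
Qed.

End ComplexMatrices.

Section Measurability.
Variables (R : realType) (n : nat).
Local Notation T := (CMx R n).
Local Notation M := 'M[R[i]]_n.

Definition cmeasurable (f : T -> R[i]) : Prop :=
  measurable_fun setT (fun X => complex.Re (f X)) /\
  measurable_fun setT (fun X => complex.Im (f X)).

Lemma cmeasurable_entry (j l : 'I_n) : cmeasurable (fun X : T => (X : M) j l).
Proof.
split=> _ B mB; rewrite setTI; apply: sub_gen_smallest; exists j, l, B;
  split=> //; [left|right]; by apply/seteqP; split => X /=; rewrite inE.
Qed.

Lemma cmeasurable_cst c : cmeasurable (fun _ => c).
Proof. by split; apply: measurable_cst. Qed.

Lemma cmeasurableD f g :
  cmeasurable f -> cmeasurable g -> cmeasurable (fun X => f X + g X).
Proof.
move=> [f1 f2] [g1 g2]; split.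
- have -> : (fun X => complex.Re (f X + g X)) =
    (fun X => complex.Re (f X)) \+ (fun X => complex.Re (g X)).
    by apply/funext => X /=; case: (f X) => ??; case: (g X).
  exact: measurable_funD.
- have -> : (fun X => complex.Im (f X + g X)) =
    (fun X => complex.Im (f X)) \+ (fun X => complex.Im (g X)).
    by apply/funext => X /=; case: (f X) => ??; case: (g X).
  exact: measurable_funD.
Qed.

Lemma cmeasurableN f : cmeasurable f -> cmeasurable (fun X => - f X).
Proof.
move=> [f1 f2]; split.
- have -> : (fun X => complex.Re (- f X)) = \- (fun X => complex.Re (f X)).
    by apply/funext => X /=; case: (f X).
  exact: measurable_funN.
- have -> : (fun X => complex.Im (- f X)) = \- (fun X => complex.Im (f X)).
    by apply/funext => X /=; case: (f X).
  exact: measurable_funN.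
Qed.

Lemma cmeasurableM f g :
  cmeasurable f -> cmeasurable g -> cmeasurable (fun X => f X * g X).
Proof.
move=> [f1 f2] [g1 g2]; split.
- have -> : (fun X => complex.Re (f X * g X)) =
    ((fun X => complex.Re (f X)) \* (fun X => complex.Re (g X))) \-
    ((fun X => complex.Im (f X)) \* (fun X => complex.Im (g X))).
    by apply/funext => X /=; case: (f X) => ??; case: (g X).
  by apply: measurable_funB; apply: measurable_funM.
- have -> : (fun X => complex.Im (f X * g X)) =
    ((fun X => complex.Re (f X)) \* (fun X => complex.Im (g X))) \+
    ((fun X => complex.Im (f X)) \* (fun X => complex.Re (g X))).
    by apply/funext => X /=; case: (f X) => ??; case: (g X).
  by apply: measurable_funD; apply: measurable_funM.
Qed.

Lemma cmeasurableJ f : cmeasurable f -> cmeasurable (fun X => (f X)^*).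
Proof.
move=> [f1 f2]; split.
  by have -> : (fun X => complex.Re ((f X)^*)) = (fun X => complex.Re (f X))
    by apply/funext => X; case: (f X).
have -> : (fun X => complex.Im ((f X)^*)) = \- (fun X => complex.Im (f X)).
  by apply/funext => X /=; case: (f X).
exact: measurable_funN.
Qed.

Lemma cmeasurable_sum (I : Type) (s : seq I) (h : I -> T -> R[i]) :
  (forall i, cmeasurable (h i)) -> cmeasurable (fun X => \sum_(i <- s) h i X).
Proof.
move=> hh; elim: s => [|a s IH].
  by under eq_fun do rewrite big_nil; apply: cmeasurable_cst.
by under eq_fun do rewrite big_cons; apply: cmeasurableD.
Qed.

Definition mx_measurable (G : T -> M) : Prop :=
  forall j l, cmeasurable (fun X => G X j l).

Lemma mx_measurable_id : mx_measurable (fun X => X).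
Proof. exact: cmeasurable_entry. Qed.

Lemma mx_measurable_cst C : mx_measurable (fun _ => C).
Proof. by move=> j l; apply: cmeasurable_cst. Qed.

Lemma mx_measurableM G H :
  mx_measurable G -> mx_measurable H -> mx_measurable (fun X => G X *m H X).
Proof.
move=> hG hH j l; under eq_fun do rewrite mxE.
by apply: cmeasurable_sum => u; apply: cmeasurableM.
Qed.

Lemma mx_measurable_ctr G : mx_measurable G -> mx_measurable (fun X => ctrmx (G X)).
Proof. by move=> hG j l; under eq_fun do rewrite !mxE; apply: cmeasurableJ. Qed.

Lemma cmeasurable_tr G : mx_measurable G -> cmeasurable (fun X => \tr (G X)).
Proof. by move=> hG; apply: cmeasurable_sum => u; apply: hG. Qed.

Lemma measurable_cmeasurable_eq0 f : cmeasurable f -> measurable [set X | f X = 0].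
Proof.
move=> [f1 f2].
have -> : [set X | f X = 0] = ((fun X => complex.Re (f X)) @^-1` [set 0]) `&`
    ((fun X => complex.Im (f X)) @^-1` [set 0]).
  apply/seteqP; split => X /=; first by move=> ->.
  by case: (f X) => a b /= [-> ->].
by apply: measurableI; rewrite -(setTI (_ @^-1` _)); [apply: f1|apply: f2].
Qed.

(* Equalizers of entrywise measurable maps are measurable: [G X = H X] iff
   the sum of the squared moduli of the entries of [G X - H X] vanishes. *)
Lemma measurable_mx_eq G H :
  mx_measurable G -> mx_measurable H -> measurable [set X | G X = H X].
Proof.
move=> hG hH; pose d X j l := G X j l - H X j l.
have -> : [set X | G X = H X] =
    [set X | \sum_(j < n) \sum_(l < n) d X j l * (d X j l)^* = 0].
  apply/seteqP; split => X /=.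
    by move=> e; apply: big1 => j _; apply: big1 => l _; rewrite /d e subrr mul0r.
  have dd_ge0 j l : 0 <= d X j l * (d X j l)^* by apply: mulcJ_ge0.
  move/eqP; rewrite psumr_eq0 => [/allP h|j _]; last exact: sumr_ge0.
  apply/matrixP => j l; apply/eqP; rewrite -subr_eq0.
  move: (h j (mem_index_enum _)); rewrite /= psumr_eq0 // => /allP/(_ l (mem_index_enum _)).
  by rewrite /= mulf_eq0 conjc_eq0 orbb.
apply: measurable_cmeasurable_eq0; apply: cmeasurable_sum => j.
apply: cmeasurable_sum => l.
have hd : cmeasurable (fun X => d X j l) by apply: cmeasurableD; [|apply: cmeasurableN].
by apply: cmeasurableM => //; apply: cmeasurableJ.
Qed.

Lemma measurable_proj_rank k : measurable [set X : T | proj_rank k (X : M)].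
Proof.
have -> : [set X : T | proj_rank k (X : M)] =
    [set X : T | ctrmx (X : M) = X] `&` [set X : T | (X : M) *m X = X] `&`
    [set X : T | \tr (X : M) - k%:R = 0].
  apply/seteqP; split => X /=.
    by move/proj_rankE => [h1 h2 h3]; rewrite h3 subrr.
  by move=> [[h1 h2] /eqP h3]; apply/proj_rankE; split => //; apply/eqP; rewrite -subr_eq0.
apply: measurableI; first apply: measurableI.
- by apply: measurable_mx_eq; [apply: mx_measurable_ctr|]; apply: mx_measurable_id.
- by apply: measurable_mx_eq; [apply: mx_measurableM|]; apply: mx_measurable_id.
- apply: measurable_cmeasurable_eq0; apply: cmeasurableD; last exact: cmeasurable_cst.
  exact: cmeasurable_tr mx_measurable_id.
Qed.

Lemma mx_measurable_fun (G : T -> M) :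
  mx_measurable G -> measurable_fun [set: T] (G : T -> T).
Proof.
move=> hG; apply: (@measurability _ _ T T _ _ (@cmx_gen R n)) => //.
move=> _ [B [j [l [B' [mB' [->|->]]]]] <-].
- have := (hG j l).1 measurableT _ mB'.
  by congr (measurable (_ `&` _)); apply/seteqP; split => X /=; rewrite inE.
- have := (hG j l).2 measurableT _ mB'.
  by congr (measurable (_ `&` _)); apply/seteqP; split => X /=; rewrite inE.
Qed.

Lemma measurable_boltzmann (Y : M) :
  measurable_fun [set: T] (fun X : T => expR (- complex.Re (inner Y (X : M)))).
Proof.
apply: measurableT_comp; first exact: measurable_expR.
have hinner : cmeasurable (fun X : T => inner Y (X : M)).
  apply: cmeasurable_tr; apply: mx_measurableM; first exact: mx_measurable_cst.
  exact: mx_measurable_ctr mx_measurable_id.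
exact: measurable_funN hinner.1.
Qed.

End Measurability.

Section Pinching.
Variables (R : realType) (n : nat).
Local Notation M := 'M[R[i]]_n.

Definition flip (m : nat) (p : 'I_n) : R[i] := if val p == m then -1 else 1.
Definition sign_mx (m : nat) : M := diag_mx (\row_p flip m p).

Lemma ctrmx_sign_mx m : ctrmx (sign_mx m) = sign_mx m.
Proof.
apply/matrixP => p q; rewrite !mxE.
case: (eqVneq p q) => [->|_]; last by rewrite !mulr0n conjc0.
by rewrite !mulr1n /flip; case: ifP; rewrite ?rmorphN1 ?rmorph1.
Qed.

Lemma unitary_sign_mx m : unitarymx_c (sign_mx m).
Proof.
rewrite /unitarymx_c ctrmx_sign_mx /sign_mx mul_diag_mx.
apply/matrixP => p q; rewrite !mxE /flip.
by case: (p == q); case: ifP; rewrite ?mulr1n ?mulr0n ?mulr0 ?mulrNN ?mulr1.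
Qed.

Lemma sign_mx_conj_entry m (W : M) p q :
  (sign_mx m *m W *m sign_mx m) p q = flip m p * W p q * flip m q.
Proof. by rewrite /sign_mx mul_mx_diag mul_diag_mx !mxE. Qed.

(* [pinch m Y] keeps the diagonal of [Y] and the block of indices >= m,
   and zeroes the other off-diagonal entries; [pinch n Y] is the diagonal
   part of [Y]. *)
Definition pinch (m : nat) (Y : M) : M :=
  \matrix_(p, q) (if (p == q) || ((m <= p) && (m <= q))%N then Y p q else 0).

Lemma pinch0 Y : pinch 0 Y = Y.
Proof. by apply/matrixP => p q; rewrite mxE !leq0n orbT. Qed.

Lemma pinch_diag m Y j : pinch m Y j j = Y j j.
Proof. by rewrite mxE eqxx. Qed.

(* One pinching step is the average of [Y] with its conjugate by the sign
   flip of coordinate [m]: this kills the off-diagonal entries of row and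
   column [m]. *)
Lemma pinchS m Y :
  pinch m.+1 Y =
  2^-1 *: (pinch m Y + ctrmx (sign_mx m) *m pinch m Y *m sign_mx m).
Proof.
have half_add (x : R[i]) : 2^-1 * (x + x) = x by field.
rewrite ctrmx_sign_mx; apply/matrixP => p q.
rewrite [in RHS]mxE [in RHS]mxE sign_mx_conj_entry !mxE /flip.
case: (eqVneq p q) => [<-|npq] /=.
  by rewrite mulrAC; case: ifP => _; rewrite ?mulrNN !mul1r half_add.
(* off the diagonal, an entry of [pinch m Y] keeps its value when neither
   index equals [m] (equal signs) and averages to 0 otherwise *)
case: ltngtP => hp; case: ltngtP => hq //=.
all: try by rewrite !(mul0r, mulr0, add0r, addr0).
all: try by rewrite ?mul1r ?mulr1 ?mulN1r ?mulrN1 ?subrr ?mulr0 ?half_add.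
all: try by rewrite mulN1r mulrN1 opprK half_add.
by case/eqP: npq; apply: val_inj => /=; rewrite -hp -hq.
Qed.

Lemma inner_pinch m (Y A : M) : is_diag_mx A -> inner (pinch m Y) A = inner Y A.
Proof.
by move=> dA; rewrite !inner_diag //; apply: eq_bigr => j _; rewrite pinch_diag.
Qed.

Lemma herm_pinch_real_diag (Y : M) : herm Y -> real_diag (pinch n Y).
Proof.
move=> hY; split.
  apply/is_diag_mxP => p q npq; rewrite mxE ifF //.
  by apply/negbTE; rewrite negb_or leqNgt ltn_ord /= andbT; apply: contra npq => /eqP ->.
move=> j; rewrite pinch_diag.
have := congr1 (fun N : M => N j j) hY; rewrite /= !mxE.
by case: (Y j j) => a b /= []; lra.
Qed.

Lemma real_diag_herm (Y : M) : real_diag Y -> herm Y.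
Proof.
move=> [/is_diag_mxP dY ImY]; apply/matrixP => p q; rewrite !mxE.
case: (eqVneq p q) => [<-|npq].
  by move: (ImY p); case: (Y p p) => a b /= ->; rewrite oppr0.
by rewrite !dY ?conjc0 // eq_sym.
Qed.

End Pinching.

(* Midpoint convexity of t |-> exp(-t), i.e. the AM-GM inequality for
   e^{-a/2} and e^{-b/2}. *)
Lemma expRN_midpoint (R : realType) (a b : R) :
  expR (- (2^-1 * (a + b))) <= 2^-1 * (expR (- a) + expR (- b)).
Proof.
have -> : - (2^-1 * (a + b)) = - (a / 2) + - (b / 2) by field.
have -> : - a = - (a / 2) + - (a / 2) by field.
have -> : - b = - (b / 2) + - (b / 2) by field.
rewrite !expRD; set u := expR (- (a / 2)); set v := expR (- (b / 2)).
by have := sqr_ge0 (u - v); lra.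
Qed.

Lemma Re_inner_midpoint (R : realType) (n : nat) (W W' X : 'M[R[i]]_n) :
  complex.Re (inner (2^-1 *: (W + W')) X) =
  2^-1 * (complex.Re (inner W X) + complex.Re (inner W' X)).
Proof.
have half_C : (2^-1 : R[i]) = (2^-1 : R)%:C by rewrite fmorphV rmorph_nat.
rewrite /inner -scalemxAl mulmxDl mxtraceZ mxtraceD half_C.
by case: (\tr (W *m ctrmx X)) => a b; case: (\tr (W' *m ctrmx X)) => c d /=; ring.
Qed.

Lemma inner_unitary_conj (R : realType) (n : nat) (U W X : 'M[R[i]]_n) :
  inner (ctrmx U *m W *m U) X = inner W (U *m X *m ctrmx U).
Proof.
by rewrite /inner !ctrmx_mul ctrmxK -!mulmxA mxtrace_mulC !mulmxA.
Qed.

Section PartitionFunction.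
Variables (R : realType) (n k : nat) (mu : probability (CMx R n) R).
Hypothesis mu_supp : mu [set X | ~ proj_rank k (X : 'M[R[i]]_n)] = 0%E.
Hypothesis mu_inv : forall U : 'M[R[i]]_n, unitarymx_c U ->
  forall B : set (CMx R n), measurable B ->
    mu ((fun X : CMx R n => (U *m (X : 'M[R[i]]_n) *m ctrmx U : CMx R n)) @^-1` B)
    = mu B.
Local Notation T := (CMx R n).
Local Notation M := 'M[R[i]]_n.
Local Notation P := [set X : T | proj_rank k (X : M)].

Definition boltzmann (Y : M) (X : T) : \bar R :=
  (expR (- complex.Re (inner Y (X : M))))%:E.

Definition partition (Y : M) : \bar R := (\int[mu]_(X in setT) boltzmann Y X)%E.

Lemma boltzmann_ge0 Y X : (0 <= boltzmann Y X)%E.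
Proof. by rewrite lee_fin expR_ge0. Qed.

Lemma measurable_boltzmannE Y : measurable_fun [set: T] (boltzmann Y).
Proof. by apply/measurable_EFinP; exact: measurable_boltzmann. Qed.

Lemma mu_proj_rank : mu P = 1%E.
Proof.
have mP : measurable P := measurable_proj_rank k.
have := probability_setT mu; rewrite -(setUv P) measureU //.
- by move=> <-; rewrite [X in _ = _ + X](_ : _ = 0%E) ?adde0 //; exact: mu_supp.
- exact: measurableC.
- by apply/subsets_disjoint.
Qed.

(* On [P_k] the weight lies between exp(-|Y|_1) and exp(|Y|_1), and
   mu(P_k) = 1, so Z(Y) is a positive real number. *)
Lemma partition_pos_fin Y : exists r : R, 0 < r /\ partition Y = r%:E.
Proof.
have mP : measurable P := measurable_proj_rank k.
have mf : measurable_fun setT (boltzmann Y) := measurable_boltzmannE Y.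
have ZP : partition Y = (\int[mu]_(X in P) boltzmann Y X)%E.
  rewrite /partition -(setUv P) ge0_integral_setU //.
  - rewrite [X in (_ + X)%E]null_set_integral ?adde0 //; first exact: measurableC.
    exact: measurable_funS measurableT (@subsetT _ (~` P)) mf.
  - exact: measurableC.
  - by rewrite setUv.
  - by move=> X _; exact: boltzmann_ge0.
  - exact/disj_set2P/subsets_disjoint.
have mfP : measurable_fun P (boltzmann Y).
  exact: measurable_funS measurableT (@subsetT _ P) mf.
have weight_bound X : P X ->
    expR (- mx_size1 Y) <= expR (- complex.Re (inner Y (X : M))) <= expR (mx_size1 Y).
  move=> /proj_rankE [hX idX _]; rewrite !ler_expR.
  by have := inner_herm_idem_bound Y hX idX; rewrite ler_norml => /andP[]; lra.
have int_cst c : (\int[mu]_(X in P) (cst c%:E) X = c%:E)%E.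
  rewrite integral_cst //.
  have -> : (mu : {measure set T -> \bar R}) P = 1%E by exact: mu_proj_rank.
  by rewrite mule1.
have up : (partition Y <= (expR (mx_size1 Y))%:E)%E.
  rewrite ZP -int_cst; apply: ge0_le_integral => //= X PX; rewrite lee_fin ?expR_ge0 //.
  by case/andP: (weight_bound X PX).
have lo : ((expR (- mx_size1 Y))%:E <= partition Y)%E.
  rewrite ZP -int_cst; apply: ge0_le_integral => //= X PX; rewrite lee_fin ?expR_ge0 //.
  by case/andP: (weight_bound X PX).
move: up lo; case: (partition Y) => [r| |] //= _; rewrite lee_fin => lo.
by exists r; split => //; apply: lt_le_trans lo; exact: expR_gt0.
Qed.

(* Unitary invariance of mu makes Z invariant under unitary conjugation. *)
Lemma partition_unitary_conj U W :
  unitarymx_c U -> partition (ctrmx U *m W *m U) = partition W.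
Proof.
move=> uU; pose phi X : T := U *m (X : M) *m ctrmx U.
have mphi : measurable_fun [set: T] phi.
  apply: mx_measurable_fun; apply: mx_measurableM; last exact: mx_measurable_cst.
  by apply: mx_measurableM; [exact: mx_measurable_cst|exact: mx_measurable_id].
transitivity (\int[mu]_(X in phi @^-1` setT) (boltzmann W \o phi) X)%E.
  by apply: eq_integral => X _; rewrite /boltzmann /= inner_unitary_conj.
rewrite -ge0_integral_pushforward //; last by move=> X _; exact: boltzmann_ge0.
  apply: eq_measure_integral => B mB _; exact: mu_inv.
exact: measurable_boltzmannE.
Qed.

(* Z is midpoint convex, by pointwise midpoint convexity of the weight. *)
Lemma partition_midpoint W W' :
  (partition (2^-1 *: (W + W')) <= (2^-1)%:E * (partition W + partition W'))%E.
Proof.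
have mW := measurable_boltzmannE W; have mW' := measurable_boltzmannE W'.
have mWW' := emeasurable_funD mW mW'.
rewrite /partition; apply: (@le_trans _ _ (\int[mu]_(X in setT)
    ((2^-1)%:E * (boltzmann W X + boltzmann W' X)))%E).
  apply: ge0_le_integral.
  - exact: measurableT.
  - by move=> X _; exact: boltzmann_ge0.
  - exact: measurable_boltzmannE.
  - exact: measurable_funeM mWW'.
  - move=> X _; rewrite /boltzmann Re_inner_midpoint -EFinD -EFinM lee_fin.
    exact: expRN_midpoint.
rewrite ge0_integralZl ?ge0_integralD.
- exact: lexx.
- exact: measurableT.
- by move=> X _; exact: boltzmann_ge0.
- exact: mW.
- by move=> X _; exact: boltzmann_ge0.
- exact: mW'.
- exact: measurableT.
- exact: mWW'.
- by move=> X _; rewrite adde_ge0 ?boltzmann_ge0.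
- by rewrite lee_fin invr_ge0.
Qed.

Lemma partition_average_conj U W : unitarymx_c U ->
  (partition (2^-1 *: (W + ctrmx U *m W *m U)) <= partition W)%E.
Proof.
move=> uU; apply: le_trans (partition_midpoint _ _) _.
rewrite partition_unitary_conj //; have [r [_ ->]] := partition_pos_fin W.
by rewrite -EFinD -EFinM lee_fin; lra.
Qed.

Lemma partition_pinch m Y : (partition (pinch m Y) <= partition Y)%E.
Proof.
elim: m => [|m IH]; first by rewrite pinch0.
by rewrite pinchS; apply: le_trans IH; apply/partition_average_conj/unitary_sign_mx.
Qed.

Lemma F_AE (A Y : M) :
  F_A mu A Y = ((complex.Re (inner Y A))%:E + (ln (fine (partition Y)))%:E)%E.
Proof. by []. Qed.

Lemma F_A_pinch (A Y : M) : is_diag_mx A ->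
  (F_A mu A (pinch n Y) <= F_A mu A Y)%E.
Proof.
move=> dA; have pinchA : inner (pinch n Y) A = inner Y A by exact: inner_pinch.
rewrite [F_A _ _ (pinch _ _)]F_AE [F_A _ _ Y]F_AE pinchA.
apply: leeD; first exact: lexx.
rewrite lee_fin.
have := partition_pinch n Y.
have [r1 [r1_gt0 ->]] := partition_pos_fin (pinch n Y).
have [r2 [r2_gt0 ->]] := partition_pos_fin Y.
by rewrite lee_fin /= => le12; rewrite ler_ln ?posrE.
Qed.

End PartitionFunction.

Theorem mainTheorem19 (R : realType) (n k : nat)
  (mu : probability (CMx R n) R)
  (mu_supp : mu [set X | ~ proj_rank k (X : 'M[R[i]]_n)] = 0%E)
  (mu_inv : forall U : 'M[R[i]]_n, unitarymx_c U ->
     forall B : set (CMx R n), measurable B ->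
       mu ((fun X : CMx R n => (U *m (X : 'M[R[i]]_n) *m ctrmx U : CMx R n)) @^-1` B)
       = mu B)
  (A : 'M[R[i]]_n) :
  (1 <= k <= n)%N ->
  real_diag A -> posdefmx A -> \tr A = k%:R ->
  ereal_inf [set F_A mu A Y | Y in [set Y | herm Y]]
  = ereal_inf [set F_A mu A Y | Y in [set Y | real_diag Y]].
Proof.
move=> _ [dA _] _ _; apply/eqP; rewrite eq_le; apply/andP; split.
  by apply: ereal_inf_le_tmp => _ [Y /real_diag_herm hY <-]; exists Y.
(* every Hermitian value is dominated by that of its real diagonal pinching *)
apply: le_ereal_inf_tmp => _ [Y hY <-]; apply: ge_ereal_inf.
exists (F_A mu A (pinch n Y)); first by exists (pinch n Y) => //; exact: herm_pinch_real_diag.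
exact: (F_A_pinch mu_supp mu_inv Y dA).
Qed.
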